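(* Let $(M,\circ,\mathrm{OR})$ be a free $\mathbb{D}$-module of rank 3 with scalar product and orientation, and let $x,y,z\in M\setminus\epsilon M$ satisfy $x+y+z=0$. Then $$\frac{\sin\alpha_{xy}}{|z|}=\frac{\sin\alpha_{yz}}{|x|}=\frac{\sin\alpha_{zx}}{|y|}.$$
   Context: $\mathbb{D}=\{a+\epsilon b: a,b\in\mathbb{R}\}$, $\epsilon^2=0$, $\mathfrak{Re}(a+\epsilon b)=a$; real-analytic functions are extended by $f(a+\epsilon b)=f(a)+\epsilon bf'(a)$; dual numbers with nonzero real part are invertible. Scalar product: symmetric $\mathbb{D}$-bilinear $\circ:M\times M\to\mathbb{D}$ with $\mathfrak{Re}(x\circ x)\ge0$, equality iff $x\in\epsilon M$; orientation: one of the two classes of ordered bases under $\{b'_j=A_{jk}b_k\}\sim\{b_k\}$ iff $\det\mathfrak{Re}(A)>0$. For $x\notin\epsilon M$, $|x|:=\sqrt{x\circ x}$ (positive real part). For $x,y\in M\setminus\epsilon M$ the dual angle $\Theta_{xy}$ is the unique dual number in $\{0\}\cup((0,\pi)+\epsilon\mathbb{R})\cup\{\pi\}$ with $\cos\Theta_{xy}=\frac{x\circ y}{|x|\,|y|}$, and $\alpha_{xy}:=\pi-\Theta_{xy}$. *)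

From Stdlib Require Import Reals Lra ClassicalEpsilon.
Open Scope R_scope.

(** * Dual numbers  D = { a + eps b },  eps^2 = 0 *)
Record dual : Type := Dual { re : R; du : R }.

Definition d0 : dual := Dual 0 0.
Definition deps : dual := Dual 0 1.
Definition dadd (u v : dual) : dual := Dual (re u + re v) (du u + du v).
Definition dopp (u : dual) : dual := Dual (- re u) (- du u).
Definition dmul (u v : dual) : dual :=
  Dual (re u * re v) (re u * du v + du u * re v).
(* inverse; meaningful when re u <> 0 *)
Definition dinv (u : dual) : dual := Dual (/ re u) (- du u / (re u * re u)).
Definition ddiv (u v : dual) : dual := dmul u (dinv v).

(** Extension of real-analytic functions: f(a + eps b) = f a + eps b f'(a). *)
Definition dsin (u : dual) : dual := Dual (sin (re u)) (du u * cos (re u)).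
Definition dcos (u : dual) : dual := Dual (cos (re u)) (- du u * sin (re u)).
(* square root, used for arguments with positive real part *)
Definition dsqrt (u : dual) : dual := Dual (sqrt (re u)) (du u / (2 * sqrt (re u))).

(** * The free D-module of rank 3, realised as D^3 *)
Record V3 : Type := Vec { c1 : dual; c2 : dual; c3 : dual }.

Definition vzero : V3 := Vec d0 d0 d0.
Definition vadd (x y : V3) : V3 := Vec (dadd (c1 x) (c1 y)) (dadd (c2 x) (c2 y)) (dadd (c3 x) (c3 y)).
Definition vscale (a : dual) (x : V3) : V3 := Vec (dmul a (c1 x)) (dmul a (c2 x)) (dmul a (c3 x)).

Definition in_epsM (x : V3) : Prop := exists w : V3, x = vscale deps w.

Record is_scalar_product (sp : V3 -> V3 -> dual) : Prop := {
  sp_sym : forall x y, sp x y = sp y x;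
  sp_addl : forall x y z, sp (vadd x y) z = dadd (sp x z) (sp y z);
  sp_scalel : forall a x y, sp (vscale a x) y = dmul a (sp x y);
  sp_pos : forall x, 0 <= re (sp x x);
  sp_zero : forall x, re (sp x x) = 0 <-> in_epsM x
}.

Definition dnorm (sp : V3 -> V3 -> dual) (x : V3) : dual := dsqrt (sp x x).

Definition angle_range (t : dual) : Prop :=
  t = d0 \/ (0 < re t < PI) \/ t = Dual PI 0.

Definition is_dual_angle (sp : V3 -> V3 -> dual) (x y : V3) (t : dual) : Prop :=
  angle_range t /\ dcos t = ddiv (sp x y) (dmul (dnorm sp x) (dnorm sp y)).

Definition Theta (sp : V3 -> V3 -> dual) (x y : V3) : dual :=
  epsilon (inhabits d0) (is_dual_angle sp x y).

Definition alpha (sp : V3 -> V3 -> dual) (x y : V3) : dual :=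
  dadd (Dual PI 0) (dopp (Theta sp x y)).

(** Write [N = (x∘x)(y∘y)(z∘z)] and [G(u,v) = (u∘u)(v∘v) - (u∘v)^2].  From
    [cos Θ_xy |x| |y| = x∘y] and [sin^2 + cos^2 = 1] one gets
    [(sin α_xy / |z|)^2 N = G(x,y)], and when [x + y + z = 0] the Gram determinant
    satisfies [G(x,y) = G(y,z) = G(z,x)].  So the three ratios have the same square
    after multiplying by the unit [N].  Each ratio is [0] or has positive real part,
    and on that cone squaring is injective, so the ratios are equal.  That [Θ] exists
    at all is the dual Cauchy-Schwarz inequality [G(u,v) ∈ {0} ∪ {Re > 0}]. *)

From Pilot Require Import Defs.
From Stdlib Require Import Reals Lra ClassicalEpsilon.
Open Scope R_scope.

(* Shadows the unrelated [d1] of the Reals library. *)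
Definition d1 : dual := Dual 1 0.

Lemma dual_eq (u v : dual) : re u = re v -> du u = du v -> u = v.
Proof. destruct u, v; simpl; intros -> ->; reflexivity. Qed.

Lemma dual_ring :
  ring_theory d0 d1 dadd dmul (fun u v => dadd u (dopp v)) dopp eq.
Proof. constructor; intros; apply dual_eq; simpl; ring. Qed.

Add Ring dual_ring : dual_ring.

Lemma dmul_dinv (u : dual) : re u <> 0 -> dmul u (dinv u) = d1.
Proof. intros Hu; apply dual_eq; simpl; field; exact Hu. Qed.

Lemma dmulK (p u : dual) : re p <> 0 -> dmul (dmul u p) (dinv p) = u.
Proof.
  intros Hp.
  transitivity (dmul u (dmul p (dinv p))); [ring|].
  rewrite (dmul_dinv p Hp); ring.
Qed.

Lemma dmul_reg_r (p u v : dual) : re p <> 0 -> dmul u p = dmul v p -> u = v.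
Proof. intros Hp Huv; rewrite <- (dmulK p u Hp), Huv; apply dmulK, Hp. Qed.

Lemma ddiv_mulK (u v : dual) : re v <> 0 -> dmul (ddiv u v) v = u.
Proof.
  intros Hv; unfold ddiv.
  transitivity (dmul u (dmul v (dinv v))); [ring|].
  rewrite (dmul_dinv v Hv); ring.
Qed.

Lemma dsqrt_re_pos (u : dual) : 0 < re u -> 0 < re (dsqrt u).
Proof. intros Hu; apply sqrt_lt_R0, Hu. Qed.

Lemma dsqrt_sq (u : dual) : 0 < re u -> dmul (dsqrt u) (dsqrt u) = u.
Proof.
  intros Hu; pose proof (dsqrt_re_pos u Hu) as Hs; simpl in Hs.
  apply dual_eq; simpl.
  - apply sqrt_sqrt; lra.
  - field; lra.
Qed.

Lemma dsin2_dcos2 (t : dual) : dadd (dmul (dsin t) (dsin t)) (dmul (dcos t) (dcos t)) = d1.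
Proof.
  apply dual_eq; simpl; [|ring].
  rewrite <- (sin2_cos2 (re t)); unfold Rsqr; ring.
Qed.

Lemma dsin_pi_sub (t : dual) : dsin (dadd (Dual PI 0) (dopp t)) = dsin t.
Proof.
  apply dual_eq; simpl; replace (PI + - re t) with (PI - re t) by ring.
  - apply sin_PI_x.
  - rewrite Rtrigo_facts.cos_pi_minus; ring.
Qed.

Definition dnonneg (u : dual) : Prop := u = d0 \/ 0 < re u.

Lemma dnonneg_mul (u v : dual) : dnonneg u -> dnonneg v -> dnonneg (dmul u v).
Proof.
  intros [->|Hu] [->|Hv]; try (left; ring).
  right; simpl; apply Rmult_lt_0_compat; assumption.
Qed.

Lemma dnonneg_mul_pos_inv (u p : dual) : 0 < re p -> dnonneg (dmul u p) -> dnonneg u.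
Proof.
  intros Hp [Hup|Hup].
  - left; apply (dmul_reg_r p); [lra|]; rewrite Hup; ring.
  - right; simpl in Hup; nra.
Qed.

Lemma dnonneg_sq_inj (u v : dual) :
  dnonneg u -> dnonneg v -> dmul u u = dmul v v -> u = v.
Proof.
  destruct u as [a b], v as [c d]; unfold dnonneg, dmul, d0; simpl.
  intros Hu Hv E; injection E as Ere Edu.
  destruct Hu as [Hu|Hu], Hv as [Hv|Hv].
  - congruence.
  - injection Hu as -> ->; nra.
  - injection Hv as -> ->; nra.
  - assert (a = c) by nra; subst c; f_equal; nra.
Qed.

Lemma dual_acos (k : dual) :
  dnonneg (dadd d1 (dopp (dmul k k))) ->
  exists t, angle_range t /\ dcos t = k.
Proof.
  destruct k as [a b]; unfold dnonneg, angle_range, d0, d1; simpl.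
  intros [E|Hk].
  - injection E as Ere Edu.
    assert (Hb : b = 0) by nra.
    assert (Ha : a = 1 \/ a = -1) by nra.
    subst b; destruct Ha as [->| ->].
    + exists d0; split; [now left|].
      apply dual_eq; simpl; [apply cos_0|ring].
    + exists (Dual PI 0); split; [now right; right|].
      apply dual_eq; simpl; [apply cos_PI|ring].
  - assert (Ha : -1 < a < 1) by nra.
    pose proof (acos_bound_lt a Ha) as Hacos.
    pose proof (sin_gt_0 _ (proj1 Hacos) (proj2 Hacos)) as Hsin.
    exists (Dual (acos a) (- b / sin (acos a))); split.
    + right; left; exact Hacos.
    + apply dual_eq; simpl; [apply cos_acos; lra|field; lra].
Qed.

Lemma dsin_nonneg (t : dual) : angle_range t -> dnonneg (dsin t).
Proof.
  intros [->|[Ht| ->]]; unfold dnonneg.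
  - left; apply dual_eq; simpl; [apply sin_0|ring].
  - right; apply sin_gt_0; apply Ht.
  - left; apply dual_eq; simpl; [apply sin_PI|ring].
Qed.

Definition gram (sp : V3 -> V3 -> dual) (u v : V3) : dual :=
  dadd (dmul (sp u u) (sp v v)) (dopp (dmul (sp u v) (sp u v))).

Definition sine_ratio (sp : V3 -> V3 -> dual) (u v w : V3) : dual :=
  ddiv (dsin (alpha sp u v)) (dnorm sp w).

Lemma vsum_zero_opp (x y z : V3) :
  vadd (vadd x y) z = vzero -> z = vscale (dopp d1) (vadd x y).
Proof.
  intros E.
  assert (Hopp : forall a b c : dual, dadd (dadd a b) c = d0 -> c = dmul (dopp d1) (dadd a b)).
  { intros a b c Habc.
    transitivity (dadd (dmul (dopp d1) (dadd a b)) (dadd (dadd a b) c)); [ring|].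
    rewrite Habc; ring. }
  destruct z as [z1 z2 z3]; unfold vscale; f_equal; apply Hopp;
    [apply (f_equal Defs.c1 E) | apply (f_equal c2 E) | apply (f_equal c3 E)].
Qed.

Section ScalarProduct.

Variable sp : V3 -> V3 -> dual.
Hypothesis Hsp : is_scalar_product sp.

Lemma sp_addr (x y z : V3) : sp x (vadd y z) = dadd (sp x y) (sp x z).
Proof. rewrite (sp_sym _ Hsp), (sp_addl _ Hsp), !(sp_sym _ Hsp _ x); reflexivity. Qed.

Lemma sp_scaler (a : dual) (x y : V3) : sp x (vscale a y) = dmul a (sp x y).
Proof. rewrite (sp_sym _ Hsp), (sp_scalel _ Hsp), (sp_sym _ Hsp y); reflexivity. Qed.

Lemma sp_lincomb (a b : dual) (u v : V3) :
  sp (vadd (vscale a u) (vscale b v)) (vadd (vscale a u) (vscale b v)) =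
  dadd (dmul (dmul a a) (sp u u))
       (dadd (dmul (dmul (dmul (Dual 2 0) a) b) (sp u v)) (dmul (dmul b b) (sp v v))).
Proof.
  rewrite (sp_addl _ Hsp), !sp_addr, !(sp_scalel _ Hsp), !sp_scaler, (sp_sym _ Hsp v u).
  apply dual_eq; simpl; ring.
Qed.

Lemma sp_self_nonneg (u : V3) : dnonneg (sp u u).
Proof.
  destruct (Rle_lt_or_eq_dec _ _ (sp_pos _ Hsp u)) as [Hu|Hu]; [now right|left].
  destruct (proj1 (sp_zero _ Hsp u) (eq_sym Hu)) as [w ->].
  rewrite (sp_scalel _ Hsp), sp_scaler.
  apply dual_eq; simpl; ring.
Qed.

Lemma sp_self_pos (u : V3) : ~ in_epsM u -> 0 < re (sp u u).
Proof.
  intros Hu; destruct (sp_self_nonneg u) as [E|Hpos]; [|exact Hpos].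
  exfalso; apply Hu, (sp_zero _ Hsp); rewrite E; reflexivity.
Qed.

(* Cauchy-Schwarz: with B = v∘v and C = u∘v, (B u - C v)∘(B u - C v) = B * gram u v. *)
Lemma gram_nonneg (u v : V3) : ~ in_epsM v -> dnonneg (gram sp u v).
Proof.
  intros Hv.
  apply (dnonneg_mul_pos_inv _ (sp v v)); [apply sp_self_pos, Hv|].
  replace (dmul (gram sp u v) (sp v v))
    with (sp (vadd (vscale (sp v v) u) (vscale (dopp (sp u v)) v))
             (vadd (vscale (sp v v) u) (vscale (dopp (sp u v)) v))).
  - apply sp_self_nonneg.
  - rewrite sp_lincomb; unfold gram; apply dual_eq; simpl; ring.
Qed.

Lemma Theta_spec (u v : V3) :
  ~ in_epsM u -> ~ in_epsM v -> is_dual_angle sp u v (Theta sp u v).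
Proof.
  intros Hu Hv; unfold Theta; apply epsilon_spec, dual_acos.
  pose proof (sp_self_pos u Hu) as Pu; pose proof (sp_self_pos v Hv) as Pv.
  pose proof (dsqrt_re_pos _ Pu) as Pnu; pose proof (dsqrt_re_pos _ Pv) as Pnv.
  pose proof (dsqrt_sq _ Pu) as Hnu; pose proof (dsqrt_sq _ Pv) as Hnv.
  unfold dnorm in *.
  set (nu := dsqrt (sp u u)) in *; set (nv := dsqrt (sp v v)) in *.
  pose proof (ddiv_mulK (sp u v) (dmul nu nv)) as Hk.
  set (k := ddiv (sp u v) (dmul nu nv)) in *.
  assert (Hk' : dmul k (dmul nu nv) = sp u v)
    by (apply Hk; simpl; apply Rgt_not_eq, Rmult_lt_0_compat; assumption).
  clearbody nu nv k.
  apply (dnonneg_mul_pos_inv _ (dmul (sp u u) (sp v v))); [simpl; nra|].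
  replace (dmul (dadd d1 (dopp (dmul k k))) (dmul (sp u u) (sp v v))) with (gram sp u v);
    [apply gram_nonneg, Hv|].
  unfold gram; rewrite <- Hk', <- Hnu, <- Hnv; ring.
Qed.

Lemma gram_cyclic (x y z : V3) :
  vadd (vadd x y) z = vzero -> gram sp y z = gram sp x y /\ gram sp z x = gram sp x y.
Proof.
  intros Hsum; rewrite (vsum_zero_opp x y z Hsum); unfold gram.
  rewrite !(sp_scalel _ Hsp), !sp_scaler, !(sp_addl _ Hsp), !sp_addr, (sp_sym _ Hsp y x).
  split; ring.
Qed.

Lemma sine_ratio_nonneg (u v w : V3) :
  ~ in_epsM u -> ~ in_epsM v -> ~ in_epsM w -> dnonneg (sine_ratio sp u v w).
Proof.
  intros Hu Hv Hw; unfold sine_ratio, alpha, ddiv; rewrite dsin_pi_sub.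
  apply dnonneg_mul; [apply dsin_nonneg, (Theta_spec u v Hu Hv)|].
  right; apply Rinv_0_lt_compat, dsqrt_re_pos, sp_self_pos, Hw.
Qed.

Lemma sine_ratio_sq (u v w : V3) :
  ~ in_epsM u -> ~ in_epsM v -> ~ in_epsM w ->
  dmul (dmul (sine_ratio sp u v w) (sine_ratio sp u v w))
       (dmul (dmul (sp u u) (sp v v)) (sp w w)) = gram sp u v.
Proof.
  intros Hu Hv Hw.
  destruct (Theta_spec u v Hu Hv) as [_ Hcos].
  pose proof (sp_self_pos u Hu) as Pu; pose proof (sp_self_pos v Hv) as Pv.
  pose proof (sp_self_pos w Hw) as Pw.
  pose proof (dsqrt_re_pos _ Pu) as Pnu; pose proof (dsqrt_re_pos _ Pv) as Pnv.
  pose proof (dsqrt_re_pos _ Pw) as Pnw.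
  pose proof (dsqrt_sq _ Pu) as Hnu; pose proof (dsqrt_sq _ Pv) as Hnv.
  pose proof (dsqrt_sq _ Pw) as Hnw.
  pose proof (dsin2_dcos2 (Theta sp u v)) as Hpyth.
  unfold sine_ratio, alpha, dnorm in *; rewrite dsin_pi_sub.
  set (nu := dsqrt (sp u u)) in *; set (nv := dsqrt (sp v v)) in *.
  set (nw := dsqrt (sp w w)) in *.
  set (s := dsin (Theta sp u v)) in *; set (c := dcos (Theta sp u v)) in *.
  assert (Hc : dmul c (dmul nu nv) = sp u v).
  { rewrite Hcos; apply ddiv_mulK; simpl; apply Rgt_not_eq, Rmult_lt_0_compat; assumption. }
  assert (Hr : dmul (ddiv s nw) nw = s) by (apply ddiv_mulK, Rgt_not_eq, Pnw).
  set (r := ddiv s nw) in *.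
  clearbody nu nv nw s c r.
  unfold gram; rewrite <- Hc, <- Hnu, <- Hnv, <- Hnw.
  transitivity (dmul (dmul (dmul r nw) (dmul r nw)) (dmul (dmul nu nu) (dmul nv nv))); [ring|].
  rewrite Hr.
  transitivity (dadd (dmul (dadd (dmul s s) (dmul c c)) (dmul (dmul nu nu) (dmul nv nv)))
                      (dopp (dmul (dmul c c) (dmul (dmul nu nu) (dmul nv nv))))); [ring|].
  rewrite Hpyth; ring.
Qed.

End ScalarProduct.

Theorem theorem19 (sp : V3 -> V3 -> dual) (Hsp : is_scalar_product sp)
  (x y z : V3) (Hx : ~ in_epsM x) (Hy : ~ in_epsM y) (Hz : ~ in_epsM z)
  (Hsum : vadd (vadd x y) z = vzero) :
  ddiv (dsin (alpha sp x y)) (dnorm sp z) = ddiv (dsin (alpha sp y z)) (dnorm sp x) /\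
  ddiv (dsin (alpha sp y z)) (dnorm sp x) = ddiv (dsin (alpha sp z x)) (dnorm sp y).
Proof.
  change (sine_ratio sp x y z = sine_ratio sp y z x /\ sine_ratio sp y z x = sine_ratio sp z x y).
  destruct (gram_cyclic sp Hsp x y z Hsum) as [Gyz Gzx].
  set (N := dmul (dmul (sp x x) (sp y y)) (sp z z)).
  assert (HN : re N <> 0).
  { pose proof (sp_self_pos sp Hsp x Hx); pose proof (sp_self_pos sp Hsp y Hy);
    pose proof (sp_self_pos sp Hsp z Hz).
    simpl; apply Rgt_not_eq; repeat apply Rmult_lt_0_compat; assumption. }
  pose proof (sine_ratio_sq sp Hsp x y z Hx Hy Hz) as Sxy.
  pose proof (sine_ratio_sq sp Hsp y z x Hy Hz Hx) as Syz.
  pose proof (sine_ratio_sq sp Hsp z x y Hz Hx Hy) as Szx.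
  fold N in Sxy.
  replace (dmul (dmul (sp y y) (sp z z)) (sp x x)) with N in Syz by (unfold N; ring).
  replace (dmul (dmul (sp z z) (sp x x)) (sp y y)) with N in Szx by (unfold N; ring).
  split; apply dnonneg_sq_inj; try apply (sine_ratio_nonneg sp Hsp); try assumption;
    apply (dmul_reg_r N); congruence.
Qed.
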